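(* Consider a matched pair study and assume Fisher's null $H_0$ holds. If $\Gamma^\star_{(k)}\le\Gamma_0$ for some $1\le k\le I$ and $\Gamma_0\in[1,\infty]$, then $\overline p_{\Gamma_0;k}:=\overline G_{\Gamma_0;k}(T)$, where $\overline G_{\Gamma_0;k}(c)=\mathbb P(\overline T(\Gamma_0;k)\ge c)$, satisfies $\mathbb P(\overline p_{\Gamma_0;k}\le\alpha)\le\alpha$ for all $\alpha\in(0,1)$.
   Context: Setting: $I$ matched pairs ($n_i=2$), potential outcomes fixed, $Z\in\mathcal Z=\{z\in\{0,1\}^{2I}:z_{i1}+z_{i2}=1\ \forall i\}$ is the only randomness, with true mechanism $\mathbb P(Z=z)=\prod_i\prod_j(p^\star_{ij})^{z_{ij}}$, $p^\star_{i1}+p^\star_{i2}=1$; true hidden bias $\Gamma^\star_i=\max_jp^\star_{ij}/\min_kp^\star_{ik}\in[1,\infty]$; $\Gamma^\star_{(k)}$ is the $k$th smallest. Fisher's null $H_0$: $Y_{ij}(1)=Y_{ij}(0)$ for all $i,j$. $T=\sum_i\sum_jZ_{ij}q_{ij}$ with $q_{ij}$ fixed functions of $Y(0)$. $\mathcal I_k$ is a set of indices of $k$ pairs with the smallest values of $|q_{i1}-q_{i2}|$. $\overline T(\Gamma_0;k)$ is a sum of independent variables: for $i\in\mathcal I_k$ it equals $\max\{q_{i1},q_{i2}\}$ with probability $\Gamma_0/(1+\Gamma_0)$ (probability 1 if $\Gamma_0=\infty$) and $\min\{q_{i1},q_{i2}\}$ otherwise; for $i\notin\mathcal I_k$ it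 equals $\max\{q_{i1},q_{i2}\}$ with probability 1. *)

From HB Require Import structures.
From mathcomp Require Import all_boot all_order all_algebra.
From mathcomp Require Import constructive_ereal.
Set Implicit Arguments. Unset Strict Implicit. Unset Printing Implicit Defensive.
Import Order.TTheory GRing.Theory Num.Theory.
Local Open Scope ring_scope.

(* Pairs are indexed by 'I_I, units within a pair by 'I_2 (ord0 = unit 1,
   ord_max = unit 2).  A treatment assignment z in
   Z = {z in {0,1}^{2I} : z_i1 + z_i2 = 1} is encoded by the function
   i |-> (the unique j with z_ij = 1), i.e. z : {ffun 'I_I -> 'I_2}. *)

Section Defs.
Variables (R : realFieldType) (I : nat).

(* P(Z = z) = prod_i prod_j p_ij^{z_ij} = prod_i p_{i, z i} *)
Definition probZ (p : 'I_I -> 'I_2 -> R) (z : {ffun 'I_I -> 'I_2}) : R :=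
  \prod_(i < I) p i (z i).

Definition probE (p : 'I_I -> 'I_2 -> R) (E : pred {ffun 'I_I -> 'I_2}) : R :=
  \sum_(z : {ffun 'I_I -> 'I_2} | E z) probZ p z.

(* T = sum_i sum_j Z_ij q_ij *)
Definition Tstat (q : 'I_I -> 'I_2 -> R) (z : {ffun 'I_I -> 'I_2}) : R :=
  \sum_(i < I) q i (z i).

Definition Gamma_star (p : 'I_I -> 'I_2 -> R) (i : 'I_I) : \bar R :=
  let mx := Num.max (p i ord0) (p i ord_max) in
  let mn := Num.min (p i ord0) (p i ord_max) in
  if mn == 0 then +oo%E else ((mx / mn)%:E)%E.

(* k-th smallest of Gamma*_1, ..., Gamma*_I  (k is 1-based) *)
Definition Gamma_star_ord (p : 'I_I -> 'I_2 -> R) (k : nat) : \bar R :=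
  nth (+oo)%E (sort <=%O [seq Gamma_star p i | i <- enum 'I_I]) k.-1.

Definition smallest_k_set (q : 'I_I -> 'I_2 -> R) (k : nat) (Ik : {set 'I_I}) : Prop :=
  #|Ik| = k /\
  forall i j, i \in Ik -> j \notin Ik ->
    `|q i ord0 - q i ord_max| <= `|q j ord0 - q j ord_max|.

(* probability that a unit of Ik takes the value max{q_i1,q_i2}:
   Gamma0/(1+Gamma0), or 1 if Gamma0 = +oo *)
Definition pi_max (Gamma0 : \bar R) : R :=
  match Gamma0 with
  | r%:E => r / (1 + r)
  | _ => 1
  end.

(* Tbar(Gamma0; k) = sum_i B_i with independent B_i; the realisation
   b : {ffun 'I_I -> bool} encodes B_i = max (b i = true) or min (b i = false). *)
Definition Tbar_weight (Gamma0 : \bar R) (Ik : {set 'I_I}) (b : {ffun 'I_I -> bool}) : R :=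
  \prod_(i < I)
    (if i \in Ik then (if b i then pi_max Gamma0 else 1 - pi_max Gamma0)
     else (if b i then 1 else 0)).

Definition Tbar_value (q : 'I_I -> 'I_2 -> R) (b : {ffun 'I_I -> bool}) : R :=
  \sum_(i < I) (if b i then Num.max (q i ord0) (q i ord_max)
                else Num.min (q i ord0) (q i ord_max)).

Definition Gbar (q : 'I_I -> 'I_2 -> R) (Gamma0 : \bar R) (Ik : {set 'I_I}) (c : R) : R :=
  \sum_(b : {ffun 'I_I -> bool} | c <= Tbar_value q b) Tbar_weight Gamma0 Ik b.

End Defs.

From HB Require Import structures.
From mathcomp Require Import all_boot all_order all_algebra perm.
From mathcomp Require Import constructive_ereal ring lra zify.
Import Order.TTheory GRing.Theory Num.Theory.
Local Open Scope ring_scope.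
Set Implicit Arguments. Unset Strict Implicit.

(* Under Fisher's null, T is a sum over pairs of max{q_i1, q_i2} or min{q_i1, q_i2},
   the max occurring independently with probability a_i = p*_{i, argmax q}; Tbar is
   the same sum with success probability Gamma0/(1+Gamma0) on I_k and 1 elsewhere.
   The upper tail P(sum >= c) is nondecreasing in each success probability.  Since
   Gamma*_(k) <= Gamma0, some set A of k pairs has a_i <= Gamma0/(1+Gamma0), so the
   tail of T is dominated by that of Tbar with A in place of I_k; exchanging A for
   the k pairs of smallest spread |q_i1 - q_i2| moves mass only upwards.  Hence Gbar
   dominates the true tail of T, and a p-value computed from a dominating tail
   function is valid. *)

Section BernoulliProduct.
Variables (R : realFieldType) (T : finType).
Implicit Types (a : T -> R) (b : {ffun T -> bool}) (g : {ffun T -> bool} -> R).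

Definition bern_mass a b : R := \prod_i (if b i then a i else 1 - a i).
Definition bern_expect a g : R := \sum_b bern_mass a b * g b.

Definition flip_at (i0 : T) b : {ffun T -> bool} :=
  [ffun i => if i == i0 then ~~ b i else b i].
Definition swap_at (i j : T) b : {ffun T -> bool} := [ffun x => b (tperm i j x)].

Definition coord_nondecreasing g := forall i b, b i -> g (flip_at i b) <= g b.

Lemma flip_atK i0 : involutive (flip_at i0).
Proof.
by move=> b; apply/ffunP => i; rewrite !ffunE; case: (i == i0); rewrite ?negbK.
Qed.

Lemma swap_atK i j : involutive (swap_at i j).
Proof. by move=> b; apply/ffunP => x; rewrite !ffunE tpermK. Qed.

Lemma eq_bern_expect a a' g : a =1 a' -> bern_expect a g = bern_expect a' g.
Proof.
by move=> eq_a; apply: eq_bigr => b _; congr (_ * _); apply: eq_bigr => i _; rewrite eq_a.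
Qed.

Lemma bern_mass_ge0 a b : (forall i, 0 <= a i <= 1) -> 0 <= bern_mass a b.
Proof.
move=> a01; apply: prodr_ge0 => i _; have /andP[a0 a1] := a01 i.
by case: (b i); rewrite ?subr_ge0.
Qed.

Lemma bern_expect_indicator a (E : pred {ffun T -> bool}) :
  bern_expect a (fun b => if E b then 1 else 0) = \sum_(b | E b) bern_mass a b.
Proof. by rewrite big_mkcond; apply: eq_bigr => b _; case: (E b); rewrite ?mulr1 ?mulr0. Qed.

Lemma bern_expect_le_at a a' g i0 :
  (forall i, 0 <= a i <= 1) -> (forall i, i != i0 -> a i = a' i) -> a i0 <= a' i0 ->
  (forall b, b i0 -> g (flip_at i0 b) <= g b) ->
  bern_expect a g <= bern_expect a' g.
Proof.
move=> a01 eq_a le_a0 g_mono.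
pose rest b := \prod_(i | i != i0) (if b i then a i else 1 - a i).
have rest_ge0 b : 0 <= rest b.
  apply: prodr_ge0 => i _; have /andP[a0 a1] := a01 i.
  by case: (b i); rewrite ?subr_ge0.
have rest_flip b : rest (flip_at i0 b) = rest b.
  by apply: eq_bigr => i ne_i; rewrite ffunE (negbTE ne_i).
(* Pairing each [b] having [b i0] with its flip leaves a convex combination at [i0]. *)
have pair_flip c : (forall i, i != i0 -> c i = a i) -> bern_expect c g =
    \sum_(b : {ffun T -> bool} | b i0) rest b * (c i0 * g b + (1 - c i0) * g (flip_at i0 b)).
  move=> eq_c; rewrite /bern_expect (bigID (fun b : {ffun T -> bool} => b i0)) /=.
  rewrite [X in _ + X](reindex (flip_at i0)) /=; last first.
    by exists (flip_at i0) => b _; rewrite flip_atK.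
  rewrite [X in _ + X](eq_bigl (fun b : {ffun T -> bool} => b i0)); last first.
    by move=> b; rewrite ffunE eqxx negbK.
  rewrite -big_split /=; apply: eq_bigr => b b_i0.
  have mass_split b' : bern_mass c b' = (if b' i0 then c i0 else 1 - c i0) * rest b'.
    rewrite /bern_mass (bigD1 i0) //=; congr (_ * _).
    by apply: eq_bigr => i ne_i; rewrite eq_c.
  by rewrite !mass_split ffunE eqxx b_i0 /= rest_flip; ring.
rewrite (pair_flip a) // (pair_flip a'); last by move=> i /eq_a ->.
apply: ler_sum => b b_i0; apply: ler_wpM2l => //.
have : 0 <= (a' i0 - a i0) * (g b - g (flip_at i0 b)).
  by apply: mulr_ge0; rewrite subr_ge0 // g_mono.
by rewrite -subr_ge0; congr (0 <= _); ring.
Qed.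

Lemma bern_expect_le a a' g :
  (forall i, 0 <= a i <= 1) -> (forall i, 0 <= a' i <= 1) -> (forall i, a i <= a' i) ->
  coord_nondecreasing g -> bern_expect a g <= bern_expect a' g.
Proof.
move=> a01 a'01 le_a g_mono.
pose upd (s : seq T) i := if i \in s then a' i else a i.
have upd01 s i : 0 <= upd s i <= 1 by rewrite /upd; case: ifP.
have le_upd s : bern_expect a g <= bern_expect (upd s) g.
  elim: s => [|x s IHs]; first by rewrite (@eq_bern_expect a (upd [::])).
  apply: le_trans IHs _; apply: (bern_expect_le_at (i0 := x)) => //.
  - by move=> i ne_i; rewrite /upd inE (negbTE ne_i).
  - by rewrite /upd inE eqxx; case: ifP.
  - by move=> b; apply: g_mono.
apply: le_trans (le_upd (enum T)) _.
by rewrite (@eq_bern_expect _ a') // => i; rewrite /upd mem_enum.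
Qed.

Lemma bern_expect_swap a g (i j : T) :
  (forall x, 0 <= a x <= 1) -> a i = 1 ->
  (forall b, b i -> g (swap_at i j b) <= g b) ->
  bern_expect (a \o tperm i j) g <= bern_expect a g.
Proof.
move=> a01 a_i g_swap.
have mass_swap b : bern_mass (a \o tperm i j) b = bern_mass a (swap_at i j b).
  rewrite /bern_mass (reindex_inj (@perm_inj _ (tperm i j))) /=.
  by apply: eq_bigr => x _; rewrite ffunE tpermK.
rewrite /bern_expect; under eq_bigr => b _ do rewrite mass_swap.
rewrite (reindex (swap_at i j)) /=; last by exists (swap_at i j) => b _; rewrite swap_atK.
apply: ler_sum => b _; rewrite swap_atK.
have [b_i|nb_i] := boolP (b i).
  by apply: ler_wpM2l; [exact: bern_mass_ge0 | exact: g_swap].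
by rewrite /bern_mass (bigD1 i) //= (negbTE nb_i) a_i subrr !mul0r.
Qed.

Definition set_prob (X : {set T}) (pm : R) i : R := if i \in X then pm else 1.

Lemma set_prob01 X pm : 0 <= pm <= 1 -> forall i, 0 <= set_prob X pm i <= 1.
Proof. by move=> pm01 i; rewrite /set_prob; case: ifP; rewrite ?ler01 ?lexx. Qed.

(* Induction on [#|A :\: B|]: each step exchanges a coordinate of [A :\: B] for
   one of [B :\: A], which has smaller spread. *)
Lemma bern_expect_min_spread (d : T -> R) g pm (A B : {set T}) :
  0 <= pm <= 1 -> #|A| = #|B| ->
  (forall i j, i \in B -> j \notin B -> d i <= d j) ->
  (forall i j b, d j <= d i -> b i -> g (swap_at i j b) <= g b) ->
  bern_expect (set_prob A pm) g <= bern_expect (set_prob B pm) g.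
Proof.
move=> pm01 + B_min g_swap; move nAB : #|A :\: B| => n.
elim: n A nAB => [|n IHn] A nAB cardA.
  have subAB : A \subset B by rewrite -setD_eq0 -cards_eq0 nAB.
  by have -> : A = B by apply/eqP; rewrite eqEcard subAB cardA leqnn.
have cardBA : #|B :\: A| = n.+1 by rewrite cardsD setIC -cardA -cardsD nAB.
have [i iAB] : exists i, i \in A :\: B by apply/set0Pn; rewrite -card_gt0 nAB.
have [j jBA] : exists j, j \in B :\: A by apply/set0Pn; rewrite -card_gt0 cardBA.
move: (iAB) (jBA); rewrite !inE => /andP[iNB iA] /andP[jNA jB].
have ne_ij : i != j by apply: contraNneq jNA => <-.
pose A' := j |: A :\ i.
have A'DB : A' :\: B = (A :\: B) :\ i.
  apply/setP => x; rewrite !inE; case: (eqVneq x j) => [->|_] /=; last exact: andbCA.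
  by rewrite jB andbF.
have nA'B : #|A' :\: B| = n.
  by move: (cardsD1 i (A :\: B)); rewrite A'DB iAB nAB add1n => -[->].
have cardA' : #|A'| = #|B|.
  by rewrite cardsU1 !inE (negbTE jNA) andbF -cardA (cardsD1 i A) iA.
apply: le_trans (IHn A' nA'B cardA').
rewrite (@eq_bern_expect _ (set_prob A' pm \o tperm i j)); last first.
  move=> x; rewrite /set_prob /A' /=.
  case: (tpermP i j x) => [->|->|/eqP ne_xi /eqP ne_xj]; rewrite !inE.
  - by rewrite iA eqxx.
  - by rewrite (negbTE jNA) eqxx andFb orbF ifN.
  - by rewrite ne_xi; case: (eqVneq x j) => // e; rewrite e eqxx in ne_xj.
apply: bern_expect_swap; first exact: set_prob01.
  by rewrite /set_prob !inE (negbTE ne_ij) eqxx.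
by move=> b b_i; apply: g_swap => //; apply: B_min.
Qed.

End BernoulliProduct.

Lemma max_sub_min (R : realDomainType) (x y : R) : Num.max x y - Num.min x y = `|x - y|.
Proof. by case: lerP => _; ring. Qed.

Lemma ler_indicator (R : realDomainType) (c x y : R) :
  x <= y -> (if c <= x then 1 else 0) <= (if c <= y then 1 else 0) :> R.
Proof. by move=> le_xy; case: ifP => [/le_trans -> // | _]; case: ifP. Qed.

Lemma ord2_cases (x : 'I_2) : x = ord0 \/ x = ord_max.
Proof. by case: x => [[|[|//]] lt_x2]; [left | right]; apply: val_inj. Qed.

Section PairedStatistic.
Variables (R : realFieldType) (I : nat) (q : 'I_I -> 'I_2 -> R).

Local Notation qmax i := (Num.max (q i ord0) (q i ord_max)).
Local Notation qmin i := (Num.min (q i ord0) (q i ord_max)).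
Local Notation spread i := `|q i ord0 - q i ord_max|.
Implicit Types (b : {ffun 'I_I -> bool}) (i j : 'I_I).

Lemma Tbar_value_flip b i : b i -> Tbar_value q (flip_at i b) <= Tbar_value q b.
Proof.
move=> b_i; rewrite /Tbar_value (bigD1 i) // [leRHS](bigD1 i) //= ffunE eqxx b_i /=.
apply: lerD; first by rewrite -subr_ge0 max_sub_min.
by rewrite le_eqVlt; apply/orP; left; apply/eqP/eq_bigr => x ne_x; rewrite ffunE (negbTE ne_x).
Qed.

Lemma Tbar_value_swap b i j : spread j <= spread i -> b i ->
  Tbar_value q (swap_at i j b) <= Tbar_value q b.
Proof.
move=> le_spread b_i; have [<-|ne_ij] := eqVneq i j.
  suff -> : swap_at i i b = b by [].
  by apply/ffunP => x; rewrite ffunE tperm1 perm1.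
rewrite -!max_sub_min in le_spread.
have ne_ji : j != i by rewrite eq_sym.
rewrite /Tbar_value (bigD1 i) // [leRHS](bigD1 i) //= (bigD1 j) //=.
rewrite [X in _ <= _ + X](bigD1 j) //= !ffunE tpermL tpermR b_i.
rewrite (eq_bigr (fun x => if b x then qmax x else qmin x)); last first.
  by move=> x /andP[ne_xi ne_xj]; rewrite ffunE tpermD // eq_sym.
by move: le_spread; case: (b j) => ?; lra.
Qed.

Lemma Gbar_bern_expect Gamma0 X c : Gbar q Gamma0 X c =
  bern_expect (set_prob X (pi_max Gamma0)) (fun b => if c <= Tbar_value q b then 1 else 0).
Proof.
rewrite bern_expect_indicator; apply: eq_bigr => b _; apply: eq_bigr => i _.
by rewrite /set_prob; case: (i \in X); case: (b i); rewrite ?subrr.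
Qed.

Definition argmax_q (i : 'I_I) : 'I_2 := if q i ord0 <= q i ord_max then ord_max else ord0.

(* An assignment [z] is coded by whether, in each pair, the unit with the
   larger [q] is the treated one. *)
Lemma probE_Tstat (p : 'I_I -> 'I_2 -> R) (P : pred R) :
  (forall i, p i ord0 + p i ord_max = 1) ->
  probE p (fun z => P (Tstat q z)) =
  \sum_(b | P (Tbar_value q b)) bern_mass (fun i => p i (argmax_q i)) b.
Proof.
move=> p_sum1.
pose dec b : {ffun 'I_I -> 'I_2} :=
  [ffun i => if b i == (q i ord0 <= q i ord_max) then ord_max else ord0].
pose enc (z : {ffun 'I_I -> 'I_2}) : {ffun 'I_I -> bool} :=
  [ffun i => (z i == ord_max) == (q i ord0 <= q i ord_max)].
rewrite /probE (reindex dec) /=; last first.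
  exists enc => [b _ | z _]; apply/ffunP => i; rewrite !ffunE.
    by case: (b i); case: (q i ord0 <= q i ord_max).
  by case: (q i ord0 <= q i ord_max); case: (ord2_cases (z i)) => ->.
apply: eq_big => [b | b _].
  congr P; apply: eq_bigr => i _; rewrite ffunE /argmax_q.
  by case: (b i); case: lerP => //= le_q; rewrite ?(max_l, min_r, max_r, min_l) // ltW.
apply: eq_bigr => i _; rewrite ffunE /argmax_q; have := p_sum1 i.
by case: (b i); case: (q i ord0 <= q i ord_max) => /= p_sum; lra.
Qed.

End PairedStatistic.

Lemma nth_sort_le_set disp (X : orderType disp) (T : finType) (f : T -> X) (x0 y : X) k :
  (0 < k <= #|T|)%N -> (nth x0 (sort <=%O [seq f i | i <- enum T]) k.-1 <= y)%O ->
  exists A : {set T}, #|A| = k /\ {in A, forall i, (f i <= y)%O}.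
Proof.
move=> /andP[k_gt0 le_kT] le_nth_y.
set s := sort _ _ in le_nth_y.
have size_s : size s = #|T| by rewrite size_sort size_map -cardT.
have sorted_s : sorted <=%O s by apply: sort_sorted; exact: le_total.
have le_k_count : (k <= count (<= y)%O s)%N.
  rewrite -(cat_take_drop k s) count_cat; apply: leq_trans (leq_addr _ _).
  have /eqP -> : count (<= y)%O (take k s) == size (take k s).
    rewrite -all_count.
    apply/(all_nthP x0) => m; rewrite size_takel ?size_s // => lt_mk.
    rewrite nth_take //; apply: le_trans le_nth_y.
    by apply: le_sorted_leq_nth => //; rewrite ?inE ?size_s; lia.
  by rewrite size_takel ?size_s.
have : (0 < #|[set A : {set T} | A \subset [set i | (f i <= y)%O] & #|A| == k]|)%N.
  rewrite cards_draws bin_gt0 cardsE cardE /enum_mem size_filter.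
  by rewrite count_sort count_map enumT in le_k_count.
rewrite card_gt0 => /set0Pn[A]; rewrite inE => /andP[/subsetP sub_A /eqP card_A].
by exists A; split=> // i /sub_A; rewrite inE.
Qed.

Lemma pi_max01 (R : realFieldType) (Gamma0 : \bar R) :
  (1 <= Gamma0)%E -> 0 <= pi_max Gamma0 <= 1.
Proof.
case: Gamma0 => [r||] //=; last by rewrite ler01 lexx.
rewrite lee_fin => r_ge1; have r1_gt0 : 0 < 1 + r by lra.
by rewrite divr_ge0 ?ler_pdivrMr //=; lra.
Qed.

(* With [M + m = 1] and [M <= r m], the larger probability [M] is at most [r / (1 + r)]. *)
Lemma le_pi_max (R : realFieldType) (I : nat) (p : 'I_I -> 'I_2 -> R) (Gamma0 : \bar R) i x :
  (forall j, 0 <= p i j) -> p i ord0 + p i ord_max = 1 ->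
  (1 <= Gamma0)%E -> (Gamma_star p i <= Gamma0)%E -> p i x <= pi_max Gamma0.
Proof.
move=> p_ge0 p_sum1 Gamma0_ge1; rewrite /Gamma_star.
have sum_Mm := addr_max_min (p i ord0) (p i ord_max); rewrite p_sum1 in sum_Mm.
have le_px : p i x <= Num.max (p i ord0) (p i ord_max).
  by case: (ord2_cases x) => ->; rewrite le_max lexx ?orbT.
have m_ge0 : 0 <= Num.min (p i ord0) (p i ord_max) by rewrite le_min !p_ge0.
move: le_px sum_Mm m_ge0; set M := Num.max _ _; set m := Num.min _ _ => le_px sum_Mm m_ge0.
case: Gamma0 Gamma0_ge1 => [r||] //=; last first.
  by move=> _ _; apply: le_trans le_px _; rewrite -sum_Mm lerDl.
rewrite lee_fin => r_ge1; case: eqP => // /eqP m_neq0.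
have m_gt0 : 0 < m by rewrite lt_def m_neq0.
rewrite lee_fin ler_pdivrMr // => le_M.
by rewrite ler_pdivlMr; nra.
Qed.

Lemma pvalue_valid (R : realFieldType) (T : finType) (w t : T -> R) (G : R -> R) alpha :
  (forall x, 0 <= w x) -> 0 <= alpha ->
  (forall c, \sum_(x | c <= t x) w x <= G c) ->
  \sum_(x | G (t x) <= alpha) w x <= alpha.
Proof.
move=> w_ge0 alpha_ge0 G_tail.
have [x0 Ex0|noE] := pickP (fun x => G (t x) <= alpha); last by rewrite big_pred0.
(* The rejection region lies in the upper tail of [t] above its smallest point. *)
case: (arg_minP (P := fun x => G (t x) <= alpha) t Ex0) => x1 Ex1 min_x1.
apply: le_trans (le_trans (G_tail (t x1)) Ex1).
rewrite [leLHS]big_mkcond [leRHS]big_mkcond; apply: ler_sum => x _.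
by case: ifP => [/min_x1 -> | _]; last case: ifP.
Qed.

Theorem corollary2 (R : realFieldType) (I : nat)
  (p : 'I_I -> 'I_2 -> R)
  (Y0 Y1 : 'I_I -> 'I_2 -> R)
  (qf : ('I_I -> 'I_2 -> R) -> 'I_I -> 'I_2 -> R)
  (k : nat) (Gamma0 : \bar R) (Ik : {set 'I_I}) :
  (forall i j, 0 <= p i j) ->
  (forall i, p i ord0 + p i ord_max = 1) ->
  (forall i j, Y1 i j = Y0 i j) ->
  (1 <= k <= I)%N ->
  (1 <= Gamma0)%E ->
  (Gamma_star_ord p k <= Gamma0)%E ->
  smallest_k_set (qf Y0) k Ik ->
  forall alpha : R, 0 < alpha < 1 ->
    probE p (fun z => Gbar (qf Y0) Gamma0 Ik (Tstat (qf Y0) z) <= alpha) <= alpha.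
Proof.
move=> p_ge0 p_sum1 _ k_bounds Gamma0_ge1 Gamma_k_le [card_Ik Ik_min] alpha /andP[alpha_gt0 _].
set q := qf Y0 in Ik_min *.
pose a i := p i (argmax_q q i).
have a01 i : 0 <= a i <= 1.
  rewrite /a p_ge0; have := p_sum1 i; have := p_ge0 i ord0; have := p_ge0 i ord_max.
  by case: (ord2_cases (argmax_q q i)) => ->; lra.
have pi01 := pi_max01 Gamma0_ge1.
have [A [card_A A_le]] :
    exists A : {set 'I_I}, #|A| = k /\ {in A, forall i, (Gamma_star p i <= Gamma0)%E}.
  by apply: nth_sort_le_set Gamma_k_le; rewrite card_ord.
rewrite (@probE_Tstat R I q p (fun t => Gbar q Gamma0 Ik t <= alpha)) //.
apply: (pvalue_valid (t := Tbar_value q) (G := Gbar q Gamma0 Ik) _ (ltW alpha_gt0)).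
  by move=> b; apply: bern_mass_ge0.
move=> c.
rewrite -bern_expect_indicator Gbar_bern_expect.
apply: le_trans (bern_expect_min_spread pi01 (_ : #|A| = #|Ik|) Ik_min _).
- apply: bern_expect_le => //; first exact: set_prob01.
  + move=> i; rewrite /set_prob; case: ifP => [/A_le | _]; first exact: le_pi_max.
    by case/andP: (a01 i).
  + by move=> i b b_i; apply/ler_indicator/Tbar_value_flip.
- by rewrite card_A card_Ik.
- by move=> i j b le_ij b_i; apply/ler_indicator/Tbar_value_swap.
Qed.
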